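(* If an infinite word $w$ is abelian-square rich and linearly recurrent, then it is uniformly abelian-square rich.
   Context: For a word $u$ over $\Sigma=\{a_1,\dots,a_\sigma\}$, its Parikh vector is $P(u)=(|u|_{a_1},\dots,|u|_{a_\sigma})$, where $|u|_a$ counts occurrences of $a$. An abelian square is a word $v_1v_2$ with $P(v_1)=P(v_2)$. The factor complexity $p_w(n)$ is the number of distinct factors of $w$ of length $n$. The recurrence index $R_w(n)$ is the least $m$ such that every factor of $w$ of length $m$ contains all factors of $w$ of length $n$; $w$ is linearly recurrent if $R_w(n)$ is defined for all $n$ and $R_w(n)/n$ is bounded. An infinite word $w$ is abelian-square rich if there is a constant $C>0$ such that for all sufficiently large $n$, $\frac{1}{p_w(n)}\sum_{v}(\text{number of distinct abelian square factors of } v)\geq Cn^2$, the sum over factors $v$ of $w$ of length $n$. It is uniformly abelian-square rich if there is a constant $C>0$ such that for all sufficiently large $n$, every factor $v$ of $w$ of length $n$ has at least $Cn^2$ distinct abelian square factors (i.e., the infimum over such $v$ is $\geq Cn^2$). *)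

From HB Require Import structures.
From mathcomp Require Import all_boot all_order all_algebra.
From mathcomp Require Import boolp reals.
Set Implicit Arguments. Unset Strict Implicit. Unset Printing Implicit Defensive.
Import Order.TTheory GRing.Theory Num.Theory.

Definition infword (A : finType) := nat -> A.

Section Words.
Variable A : finType.

Definition parikh (u : seq A) : {ffun A -> nat} := [ffun a => count_mem a u].

(* u is an abelian square: u = v1 v2 with P(v1) = P(v2).  Necessarily
   |v1| = |v2| = |u|/2; we count only nonempty abelian squares. *)
Definition abelian_square (u : seq A) : bool :=
  [&& 0 < size u, ~~ odd (size u) &
      parikh (take (size u)./2 u) == parikh (drop (size u)./2 u)].

Definition factors_of (v : seq A) : seq (seq A) :=
  [seq take l (drop i v) | i <- iota 0 (size v), l <- iota 1 (size v - i)].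

Definition nb_asq (v : seq A) : nat :=
  size (undup (filter abelian_square (factors_of v))).

Definition factor_at (w : infword A) (i n : nat) : n.-tuple A :=
  [tuple w (i + j) | j < n].

Definition factors (w : infword A) (n : nat) : {set n.-tuple A} :=
  [set t | `[< exists i, t = factor_at w i n >]].

Definition complexity (w : infword A) (n : nat) : nat := #|factors w n|.

(* Every factor of w of length m contains every factor of w of length n. *)
Definition recurrent_within (w : infword A) (n m : nat) : Prop :=
  forall i k : nat, exists j : nat,
    [/\ i <= j, j + n <= i + m & forall l, l < n -> w (j + l) = w (k + l)].

Definition is_recurrence_index (w : infword A) (n m : nat) : Prop :=
  recurrent_within w n m /\ forall m', recurrent_within w n m' -> m <= m'.

Definition linearly_recurrent (w : infword A) : Prop :=
  (forall n, exists m, is_recurrence_index w n m) /\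
  exists K : nat, forall n m, 0 < n -> is_recurrence_index w n m -> m <= K * n.

Local Open Scope ring_scope.

Definition abelian_square_rich (R : realType) (w : infword A) : Prop :=
  exists C : R, 0 < C /\ exists N : nat, forall n : nat, (N <= n)%N ->
    C * (n%:R) ^+ 2 <=
      (complexity w n)%:R^-1 * (\sum_(t in factors w n) (nb_asq t)%:R).

Definition uniformly_abelian_square_rich (R : realType) (w : infword A) : Prop :=
  exists C : R, 0 < C /\ exists N : nat, forall n : nat, (N <= n)%N ->
    forall i : nat, C * (n%:R) ^+ 2 <= (nb_asq (factor_at w i n))%:R.

End Words.

From mathcomp Require Import all_boot all_order all_algebra.
From mathcomp Require Import boolp reals.
From mathcomp Require Import zify ring.
Set Implicit Arguments. Unset Strict Implicit. Unset Printing Implicit Defensive.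
Import Order.TTheory GRing.Theory Num.Theory.

(* Some factor v of length n has at least as many abelian squares as the
   average, hence at least C n^2.  If R_w(n) <= K n, every factor of w of
   length m with K n <= m < 2 K n contains v, and abelian squares of v are
   abelian squares of the longer factor; so it has at least
   C n^2 >= C/(4K^2) m^2 of them. *)

Section FiniteWords.
Variable A : finType.

Lemma factors_ofP (v x : seq A) :
  reflect (exists i l, [/\ i < size v, 0 < l, l <= size v - i & x = take l (drop i v)])
          (x \in factors_of v).
Proof.
apply: (iffP allpairsPdep) => [[i [l [+ + ->]]] | [i [l [Hi Hl1 Hl2 ->]]]].
  by rewrite !mem_iota => Hi Hl; exists i, l; split => //; lia.
by exists i, l; rewrite !mem_iota; split => //; lia.
Qed.

Lemma factors_of_take_drop (s x : seq A) d n :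
  d + n <= size s -> x \in factors_of (take n (drop d s)) -> x \in factors_of s.
Proof.
move=> Hs /factors_ofP [i [l]].
have -> : size (take n (drop d s)) = n by rewrite size_takel // size_drop; lia.
move=> [Hi Hl1 Hl2 ->]; apply/factors_ofP; exists (d + i), l; split; [lia|lia|lia|].
rewrite -{1}(subnK (ltnW Hi)) -take_drop take_takel; last lia.
by rewrite drop_drop addnC.
Qed.

Lemma nb_asq_take_drop (s : seq A) d n :
  d + n <= size s -> nb_asq (take n (drop d s)) <= nb_asq s.
Proof.
move=> Hs; apply: uniq_leq_size; first exact: undup_uniq.
move=> x; rewrite !mem_undup !mem_filter => /andP[-> /=].
exact: factors_of_take_drop.
Qed.

End FiniteWords.

Section InfiniteWords.
Variables (A : finType) (w : infword A).

Lemma nth_factor_at x0 i n p : p < n -> nth x0 (factor_at w i n) p = w (i + p).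
Proof. by move=> Hp; exact: (nth_mktuple _ x0 (Ordinal Hp)). Qed.

Lemma factor_at_take_drop i j n m :
  i <= j -> j + n <= i + m ->
  val (factor_at w j n) = take n (drop (j - i) (factor_at w i m)).
Proof.
move=> Hij Hjn; apply: (@eq_from_nth _ (w 0)).
  by rewrite size_tuple size_takel // size_drop size_tuple; lia.
move=> p; rewrite size_tuple => Hp.
by rewrite nth_take // nth_drop !nth_factor_at //; [congr w; lia | lia].
Qed.

Lemma eq_factor_at j k n :
  (forall l, l < n -> w (j + l) = w (k + l)) -> factor_at w j n = factor_at w k n.
Proof.
move=> Hjk; apply: val_inj; apply: (@eq_from_nth _ (w 0)); first by rewrite !size_tuple.
by move=> p; rewrite size_tuple => Hp; rewrite !nth_factor_at // Hjk.
Qed.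

Lemma factor_at_in_factors i n : factor_at w i n \in factors w n.
Proof. by rewrite inE; apply/asboolP; exists i. Qed.

Lemma recurrent_within_le n r m :
  r <= m -> recurrent_within w n r -> recurrent_within w n m.
Proof.
move=> Hrm Hr i k; have [j [Hij Hjr Hjk]] := Hr i k.
by exists j; split => //; lia.
Qed.

Lemma nb_asq_recurrent_within n m i k :
  recurrent_within w n m ->
  nb_asq (factor_at w k n) <= nb_asq (factor_at w i m).
Proof.
move=> /(_ i k) [j [Hij Hjn /eq_factor_at <-]].
rewrite (factor_at_take_drop Hij Hjn); apply: nb_asq_take_drop.
by rewrite size_tuple; lia.
Qed.

Local Open Scope ring_scope.

Lemma exists_factor_above_average (R : realFieldType) n :
  exists k, (complexity w n)%:R^-1 * (\sum_(t in factors w n) (nb_asq t)%:R)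
            <= (nb_asq (factor_at w k n))%:R :> R.
Proof.
have Hc : (0 < #|factors w n|)%N by apply/card_gt0P; exists (factor_at w 0 n);
  exact: factor_at_in_factors.
have [t0 /[!inE] /asboolP [k ->] Hmax] := eq_bigmax_cond (fun t : n.-tuple A => nb_asq t) Hc.
exists k; rewrite -Hmax ler_pdivrMl ?ltr0n // mulr_natl -sumr_const.
by apply: ler_sum => t Ht; rewrite ler_nat; exact: leq_bigmax_cond.
Qed.

End InfiniteWords.

Local Open Scope ring_scope.

Lemma le_quadratic_rescale (R : realFieldType) (C : R) (c m n : nat) :
  0 <= C -> (0 < c)%N -> (m <= c * n)%N ->
  C / (c ^ 2)%:R * m%:R ^+ 2 <= C * n%:R ^+ 2.
Proof.
move=> C0 c0 Hm.
have Hc : (c%:R : R) != 0 by rewrite pnatr_eq0 -lt0n.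
have -> : C * n%:R ^+ 2 = C / (c ^ 2)%:R * (c * n)%:R ^+ 2.
  by rewrite natrX natrM; field.
by rewrite ler_wpM2l ?divr_ge0 ?lerXn2r ?nnegrE ?ler_nat.
Qed.

Theorem lemma2 (R : realType) (A : finType) (w : infword A) :
  abelian_square_rich R w -> linearly_recurrent w ->
  uniformly_abelian_square_rich R w.
Proof.
move=> [C [C0 [N HN]]] [Hrec [K HK]].
exists (C / ((2 * K.+1) ^ 2)%N%:R); split; first by rewrite divr_gt0 ?ltr0n ?expn_gt0.
exists (N.+1 * K.+1)%N => m Hm i.
set n := (m %/ K.+1)%N.
have Hn_lo : (n * K.+1 <= m)%N by exact: leq_divM.
have Hn_hi : (m < n.+1 * K.+1)%N by exact: ltn_ceil.
have HNn : (N < n)%N by have := leq_ltn_trans Hm Hn_hi; rewrite ltn_pmul2r.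
have [k Hk] := exists_factor_above_average w R n.
have [r [Hr Hrmin]] := Hrec n.
have HrK : (r <= K * n)%N := HK n r (leq_ltn_trans (leq0n N) HNn) (conj Hr Hrmin).
have Hwithin : recurrent_within w n m by apply: recurrent_within_le Hr; nia.
have Hmn : (m <= 2 * K.+1 * n)%N by nia.
apply: le_trans (le_quadratic_rescale (ltW C0) (ltn0Sn _) Hmn) _.
apply: (le_trans (HN n (ltnW HNn))); apply: (le_trans Hk).
by rewrite ler_nat; exact: nb_asq_recurrent_within.
Qed.
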